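(* Let $G$ be a compact group with normalized Haar measure $dg$ and let $V$ be a finite-dimensional unitary complex representation of $G$ which decomposes as $V\cong\bigoplus_{\ell=1}^L V_\ell^{\oplus R_\ell}$, where $V_1,\ldots,V_L$ are pairwise non-isomorphic irreducible representations with $\dim V_\ell=N_\ell$. Fix, for each $\ell$, an orthonormal basis of $V_\ell$, and a $G$-equivariant unitary isomorphism of $V$ with $\bigoplus_\ell V_\ell^{\oplus R_\ell}$, so that each $f\in V$ is represented by an $L$-tuple $(A_1,\ldots,A_L)$, where $A_\ell$ is the complex $N_\ell\times R_\ell$ matrix whose $i$-th column is the coordinate vector of the component of $f$ in the $i$-th copy of $V_\ell$. Let $H=\prod_{\ell=1}^L U(N_\ell)$ act on $V$ by $(U_1,\ldots,U_L)\cdot(A_1,\ldots,A_L)=(U_1A_1,\ldots,U_LA_L)$. For $f\in V$ define the second moment $m^2_f=\int_G (g\cdot f)(g\cdot f)^*\,dg$ (with respect to an orthonormal basis of $V$). Then for $f,f'\in V$, $m^2_f=m^2_{f'}$ if and only if $f=h\cdot f'$ for some $h\in H$.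
   Context: Every finite-dimensional representation of a compact group is unitary and decomposes as a direct sum of irreducible representations; $V_\ell^{\oplus R_\ell}$ denotes the direct sum of $R_\ell$ copies of $V_\ell$. $U(n)$ denotes the group of $n\times n$ unitary matrices. *)

From HB Require Import structures.
From mathcomp Require Import all_boot all_order all_algebra.
From mathcomp Require Import all_classical all_reals all_analysis.
From mathcomp Require Import complex.

Set Implicit Arguments.
Unset Strict Implicit.
Unset Printing Implicit Defensive.

Import Order.TTheory GRing.Theory Num.Theory.
Import numFieldNormedType.Exports.
Local Open Scope ring_scope.
Local Open Scope classical_set_scope.

Notation Borel G := (g_sigma_algebraType (@open G)).

Definition is_compact_group (G : ptopologicalType)
  (mul : G -> G -> G) (inv : G -> G) (one : G) : Prop :=
  (forall a b c, mul a (mul b c) = mul (mul a b) c) /\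
  (forall a, mul one a = a /\ mul a one = a) /\
  (forall a, mul (inv a) a = one /\ mul a (inv a) = one) /\
  continuous (fun p : G * G => mul p.1 p.2) /\
  continuous inv /\
  hausdorff_space G /\
  compact [set: G].

(* mu is a normalized Haar measure: a left- and right-invariant Borel
   probability measure (on a compact group Haar measure is bi-invariant). *)
Definition is_normalized_haar (R : realType) (G : ptopologicalType)
  (mul : G -> G -> G) (mu : probability (Borel G) R) : Prop :=
  (forall (a : G) (A : set (Borel G)), measurable A ->
      mu [set mul a x | x in A] = mu A) /\
  (forall (a : G) (A : set (Borel G)), measurable A ->
      mu [set mul x a | x in A] = mu A).

Definition adjmx (R : realType) m n (A : 'M[R[i]]_(m, n)) : 'M[R[i]]_(n, m) :=
  map_mx (@conjc R) A^T.

Definition unitarymx (R : realType) n (A : 'M[R[i]]_n) : Prop :=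
  A *m adjmx A = 1%:M.

Definition is_unitary_rep (R : realType) (G : ptopologicalType)
  (mul : G -> G -> G) (one : G) n (rho : G -> 'M[R[i]]_n) : Prop :=
  [/\ (forall a b, rho (mul a b) = rho a *m rho b),
      rho one = 1%:M,
      (forall g, unitarymx (rho g)) &
      (forall i j, continuous (fun g : G => complex.Re (rho g i j) : R) /\
                   continuous (fun g : G => complex.Im (rho g i j) : R))].

(* irreducible: nonzero, and the only invariant subspaces of C^n are 0 and
   C^n; subspaces are encoded as row spaces of matrices U (rows = vectors),
   invariance of the column-vector action x |-> rho g x being
   stability of the row space under right multiplication by (rho g)^T. *)
Definition is_irreducible (R : realType) (G : Type) n
  (rho : G -> 'M[R[i]]_n) : Prop :=
  (0 < n)%N /\
  forall U : 'M[R[i]]_n, (forall g, stablemx U (rho g)^T) ->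
     U = 0 \/ row_full U.

Definition rep_iso (R : realType) (G : Type) n1 n2
  (rho1 : G -> 'M[R[i]]_n1) (rho2 : G -> 'M[R[i]]_n2) : Prop :=
  exists T : 'M[R[i]]_(n1, n2),
    row_free T /\ row_full T /\ forall g, rho1 g *m T = T *m rho2 g.

Definition cintegral (R : realType) (G : ptopologicalType)
  (mu : probability (Borel G) R) (h : G -> R[i]) : R[i] :=
  Complex (Rintegral mu setT (fun g => complex.Re (h g)))
          (Rintegral mu setT (fun g => complex.Im (h g))).

Definition moment2 (R : realType) (G : ptopologicalType)
  (mu : probability (Borel G) R) n (rho : G -> 'M[R[i]]_n)
  (f : 'cV[R[i]]_n) : 'M[R[i]]_n :=
  \matrix_(a, b) cintegral mu
     (fun g => (rho g *m f) a 0 * conjc ((rho g *m f) b 0)).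

(* index set of coordinates of \bigoplus_l V_l^{R_l}:
   (l, (j, i)) = j-th coordinate of the i-th copy of V_l,
   i.e. entry (j, i) of the N_l x R_l matrix A_l *)
Definition cidx L (N Rm : 'I_L -> nat) : finType :=
  {l : 'I_L & ('I_(N l) * 'I_(Rm l))%type}.

Definition mkidx L (N Rm : 'I_L -> nat) (l : 'I_L) (j : 'I_(N l))
  (i : 'I_(Rm l)) : cidx N Rm :=
  Tagged (fun l => ('I_(N l) * 'I_(Rm l))%type) (j, i).

Definition coords (R : realType) L (N Rm : 'I_L -> nat) n
  (Phi : cidx N Rm -> 'I_n -> R[i]) (f : 'cV[R[i]]_n) : cidx N Rm -> R[i] :=
  fun x => \sum_(k < n) Phi x k * f k 0.

Definition unitary_coords (R : realType) L (N Rm : 'I_L -> nat) n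
  (Phi : cidx N Rm -> 'I_n -> R[i]) : Prop :=
  (forall k k' : 'I_n,
      \sum_(x : cidx N Rm) conjc (Phi x k) * Phi x k' = (k == k')%:R) /\
  (forall x y : cidx N Rm,
      \sum_(k < n) Phi x k * conjc (Phi y k) = (x == y)%:R).

Definition equivariant_coords (R : realType) (G : Type) L (N Rm : 'I_L -> nat)
  n (rho : G -> 'M[R[i]]_n) (sigma : forall l, G -> 'M[R[i]]_(N l))
  (Phi : cidx N Rm -> 'I_n -> R[i]) : Prop :=
  forall g (f : 'cV[R[i]]_n) (l : 'I_L) (j : 'I_(N l)) (i : 'I_(Rm l)),
    coords Phi (rho g *m f) (mkidx j i) =
    \sum_(k < N l) sigma l g j k * coords Phi f (mkidx k i).

Definition H_related (R : realType) L (N Rm : 'I_L -> nat) n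
  (Phi : cidx N Rm -> 'I_n -> R[i]) (f f' : 'cV[R[i]]_n) : Prop :=
  exists U : forall l : 'I_L, 'M[R[i]]_(N l),
    (forall l, unitarymx (U l)) /\
    forall (l : 'I_L) (j : 'I_(N l)) (i : 'I_(Rm l)),
      coords Phi f (mkidx j i) =
      \sum_(k < N l) U l j k * coords Phi f' (mkidx k i).

From HB Require Import structures.
From mathcomp Require Import all_boot all_order all_algebra.
From mathcomp Require Import all_classical all_reals all_analysis.
From mathcomp Require Import complex spectral.
Import Order.TTheory GRing.Theory Num.Theory Num.Def.
Import numFieldNormedType.Exports.

(* The Schur orthogonality relations
     \int_G sigma_l(g)_jk conj(sigma_l'(g)_j'k') dg
       = [l = l'] [j = j'] [k = k'] / N_l
   show that in the coordinates given by Phi the second moment of f is block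
   diagonal, its block on V_l^{R_l} being Id_{N_l} / N_l tensored with the
   transposed Gram matrix of the columns of A_l.  Hence m^2_f = m^2_f' iff
   A_l^* A_l = A'_l^* A'_l for every l; and two matrices with the same Gram
   matrix differ by a unitary factor on the left, because the isometry between
   their column spans extends to a unitary map. *)

Set Implicit Arguments.
Unset Strict Implicit.
Unset Printing Implicit Defensive.

Local Open Scope ring_scope.
Local Open Scope sesquilinear_scope.
Local Open Scope classical_set_scope.

Section GramUnitary.
Variable C : numClosedFieldType.

Local Notation "B ^!" :=
  (orthomx conjC (mx_of_hermitian (hermitian1mx _)) B) : matrix_set_scope.

Lemma trmxC_mul m n p (A : 'M[C]_(m, n)) (B : 'M[C]_(n, p)) :
  (A *m B)^t* = B^t* *m A^t*.
Proof. by rewrite trmx_mul map_mxM. Qed.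

Lemma mulmxtC_eq0 m n (M : 'M[C]_(m, n)) : M *m M^t* = 0 -> M = 0.
Proof.
move=> /matrixP MMt0; apply/matrixP => i j; rewrite mxE.
have /eqP := MMt0 i i; rewrite !mxE psumr_eq0 => [/allP/(_ j)|k _].
  by rewrite mem_index_enum !mxE mul_conjC_eq0 => /(_ isT)/implyP/(_ isT)/eqP.
by rewrite !mxE mul_conjC_ge0.
Qed.

Lemma mulmxtC0_sym p q n (A : 'M[C]_(p, n)) (B : 'M[C]_(q, n)) :
  A *m B^t* = 0 -> B *m A^t* = 0.
Proof.
by move=> AB0; rewrite -[LHS]trmxCK trmxC_mul trmxCK AB0 trmx0 map_mx0.
Qed.

Lemma eq_gram_mulmx0 r n k (P Q : 'M[C]_(r, n)) (Z : 'M[C]_(k, r)) :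
  P *m P^t* = Q *m Q^t* -> Z *m P = 0 -> Z *m Q = 0.
Proof.
move=> PQ ZP; apply: mulmxtC_eq0.
by rewrite trmxC_mul mulmxA -(mulmxA Z) -PQ mulmxA -(mulmxA (Z *m P))
  -trmxC_mul ZP mul0mx.
Qed.

Lemma eq_gram_rank r n (P Q : 'M[C]_(r, n)) :
  P *m P^t* = Q *m Q^t* -> \rank P = \rank Q.
Proof.
move=> PQ; have kerPQ : (kermx P == kermx Q)%MS.
  by apply/andP; split; apply/sub_kermxP;
    [apply: (eq_gram_mulmx0 PQ) | apply: (eq_gram_mulmx0 (esym PQ))];
    apply/sub_kermxP.
by rewrite -(subKn (rank_leq_row P)) -mxrank_ker (eqmx_rank kerPQ) mxrank_ker
  subKn ?rank_leq_row.
Qed.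

Lemma eq_gram_unitary_full m n (X Y : 'M[C]_(m, n)) : row_full X ->
  X *m X^t* = Y *m Y^t* -> exists2 V : 'M[C]_n, V \is unitarymx & X *m V = Y.
Proof.
move=> fullX XY; have pinvXK : pinvmx X *m X = 1%:M.
  by have := mulmxKpV (submx_full 1%:M fullX); rewrite mul1mx.
exists (pinvmx X *m Y).
  apply/unitarymxP; rewrite trmxC_mul mulmxA -(mulmxA _ Y) -XY mulmxA pinvXK.
  by rewrite mul1mx -trmxC_mul pinvXK trmx1 map_mx1.
have XpinvX1 : (X *m pinvmx X - 1%:M) *m X = 0.
  by rewrite mulmxBl -mulmxA pinvXK mulmx1 mul1mx subrr.
move: (eq_gram_mulmx0 XY XpinvX1); rewrite mulmxBl mul1mx => /subr0_eq.
by rewrite -mulmxA.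
Qed.

Lemma eq_gram_unitary_compl r k n (P Q : 'M[C]_(r, n)) (Pc Qc : 'M[C]_(k, n)) :
  Pc \is unitarymx -> Qc \is unitarymx -> Pc *m P^t* = 0 -> Qc *m Q^t* = 0 ->
  row_full (col_mx P Pc) -> P *m P^t* = Q *m Q^t* ->
  exists2 V : 'M[C]_n, V \is unitarymx & P *m V = Q.
Proof.
move=> /unitarymxP uPc /unitarymxP uQc PcP QcQ fullPPc PQ.
have gramPQc :
    col_mx P Pc *m (col_mx P Pc)^t* = col_mx Q Qc *m (col_mx Q Qc)^t*.
  by rewrite !tr_col_mx !map_row_mx !mul_col_row uPc uQc PcP QcQ
    (mulmxtC0_sym PcP) (mulmxtC0_sym QcQ) PQ.
have [V uV] := eq_gram_unitary_full fullPPc gramPQc.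
by rewrite mul_col_mx => /eq_col_mx[PVQ _]; exists V.
Qed.

Lemma eq_gram_unitary r n (P Q : 'M[C]_(r, n)) :
  P *m P^t* = Q *m Q^t* -> exists2 V : 'M[C]_n, V \is unitarymx & P *m V = Q.
Proof.
(* Complete P and Q by orthonormal bases of the orthogonal complements of
   their row spaces, which have the same dimension by eq_gram_rank. *)
move=> PQ; pose compl m (A : 'M[C]_(m, n)) := schmidt (row_base A^!%MS).
have compl_unitary m (A : 'M[C]_(m, n)) : compl m A \is unitarymx.
  by rewrite schmidt_unitarymx // rank_leq_col.
have compl_ortho m (A : 'M[C]_(m, n)) : compl m A *m A^t* = 0.
  by apply/orthomx1P; rewrite eqmx_schmidt_free ?row_base_free // eq_row_base.
have fullPc : row_full (col_mx P (compl r P)).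
  rewrite /row_full -addsmxE (adds_eqmx (eqmx_refl P)
    (eqmx_schmidt_free (row_base_free _))).
  by rewrite (adds_eqmx (eqmx_refl P) (eq_row_base _)) addsmx_ortho mxrank1.
have rPQ : \rank P^!%MS = \rank Q^!%MS by rewrite !rank_ortho (eq_gram_rank PQ).
move: (compl r Q) (compl_unitary r Q) (compl_ortho r Q); rewrite -rPQ.
move=> Qc uQc QcQ.
exact: eq_gram_unitary_compl (compl_unitary r P) uQc (compl_ortho r P) QcQ
  fullPc PQ.
Qed.
End GramUnitary.

Section Schur.
Variables (R : realType) (G : Type).

Lemma irreducible_commutant_scalar n (s : G -> 'M[R[i]]_n) (T : 'M[R[i]]_n) :
  is_irreducible s -> (forall g, s g *m T = T *m s g) -> exists c, T = c%:M.
Proof.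
move=> [n_gt0 irr] sT; have [c eigc] := eigenvalue_closed T^T n_gt0.
exists c; pose U := eigenspace T^T c.
have UT : U *m T^T = c *: U by apply/eigenspaceP.
have [U0|fullU] : U = 0 \/ row_full U.
- apply: irr => g; apply/eigenspaceP; rewrite -/U.
  by rewrite -mulmxA -trmx_mul -sT trmx_mul mulmxA UT -scalemxAl.
- by move: eigc; rewrite /eigenvalue -/U U0 eqxx.
have /eigenspaceP : (1%:M <= U)%MS by rewrite sub1mx.
by rewrite mul1mx scalemx1 => TTc; rewrite -[T]trmxK TTc tr_scalar_mx.
Qed.

Lemma intertwiner_noniso_eq0 n1 n2 (s1 : G -> 'M[R[i]]_n1)
    (s2 : G -> 'M[R[i]]_n2) (T : 'M[R[i]]_(n1, n2)) :
  is_irreducible s1 -> is_irreducible s2 -> ~ rep_iso s1 s2 ->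
  (forall g, s1 g *m T = T *m s2 g) -> T = 0.
Proof.
move=> [_ irr1] [_ irr2] noniso sT; apply: trmx_inj; rewrite trmx0.
have [K0|fullK] : kermx T^T = 0 \/ row_full (kermx T^T).
  apply: irr2 => g; apply/sub_kermxP.
  by rewrite -mulmxA -trmx_mul -sT trmx_mul mulmxA mulmx_ker mul0mx.
- have [I0|fullI] : <<T^T>>%MS = 0 \/ row_full <<T^T>>%MS.
    apply: irr1 => g; rewrite (eqmxMr _ (genmxE _)) genmxE.
    by rewrite -trmx_mul sT trmx_mul submxMl.
  + by apply/eqP; rewrite -submx0 -I0 genmxE.
  have freeTt : row_free T^T by rewrite -kermx_eq0 K0.
  case: noniso; exists T; split; last split => //.
    by move: fullI; rewrite /row_full /row_free genmxE mxrank_tr.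
  by move: freeTt; rewrite /row_full /row_free mxrank_tr.
- have /sub_kermxP : (1%:M <= kermx T^T)%MS by rewrite sub1mx.
  by rewrite mul1mx.
Qed.
End Schur.

Section ComplexParts.
Variable R : realType.

Lemma complex_ReD (x y : R[i]) :
  complex.Re (x + y) = complex.Re x + complex.Re y.
Proof. by case: x y => ? ? []. Qed.

Lemma complex_ImD (x y : R[i]) :
  complex.Im (x + y) = complex.Im x + complex.Im y.
Proof. by case: x y => ? ? []. Qed.

Lemma complex_ReM (x y : R[i]) : complex.Re (x * y) =
  complex.Re x * complex.Re y - complex.Im x * complex.Im y.
Proof. by case: x y => ? ? []. Qed.

Lemma complex_ImM (x y : R[i]) : complex.Im (x * y) =
  complex.Re x * complex.Im y + complex.Im x * complex.Re y.
Proof. by case: x y => ? ? []. Qed.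

Lemma complex_Re_conj (x : R[i]) : complex.Re (conjc x) = complex.Re x.
Proof. by case: x. Qed.

Lemma complex_Im_conj (x : R[i]) : complex.Im (conjc x) = - complex.Im x.
Proof. by case: x. Qed.
End ComplexParts.

Section CompactIntegral.
Variables (R : realType) (T : ptopologicalType).
Hypothesis compactT : compact [set: T].
Variable mu : probability (Borel T) R.

Lemma continuous_Borel_measurable (h : T -> R) :
  continuous h -> measurable_fun (T := Borel T) setT h.
Proof.
move=> /continuousP hopen.
apply: (measurability _ (measurable_realfun.RGenOpens.measurableE R)).
move=> _ [_ [a [b ->]] <-]; apply: sub_sigma_algebra.
by rewrite setTI; apply: hopen; exact: interval_open.
Qed.

Lemma continuous_integrable (h : T -> R) :
  continuous h -> mu.-integrable setT (EFin \o h).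
Proof.
move=> ch; have [M [_ hM]] : bounded_set (h @` setT).
  apply/compact_bounded/continuous_compact => //.
  exact/continuous_subspaceT.
apply: measurable_bounded_integrable => //.
- by have /= -> := probability_setT mu; rewrite ltry.
- exact: continuous_Borel_measurable.
exists (M + 1); split; first by rewrite num_real.
move=> y My t _ /=; apply: le_trans (ltW My).
by apply: (hM (M + 1)); [rewrite ltrDl | exists t].
Qed.

Lemma Rintegral_comp_preserving (phi : T -> T) (h : T -> R) :
  continuous phi ->
  (forall A : set (Borel T), measurable A -> mu (phi @^-1` A) = mu A) ->
  continuous h -> Rintegral mu setT (h \o phi) = Rintegral mu setT h.
Proof.
move=> cphi phi_mu ch; rewrite /Rintegral; congr fine.
have mphi : measurable_fun (T := Borel T) (U := Borel T) setT phi.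
  apply: (@measurability _ _ (Borel T) (Borel T) setT phi open) => //.
  move=> _ [B oB <-].
  by apply: sub_sigma_algebra; rewrite setTI; move/continuousP: cphi; apply.
rewrite [RHS](eq_measure_integral
  (pushforward mu (phi : Borel T -> Borel T))); last first.
  by move=> A mA _; exact/esym/phi_mu.
rewrite integral_pushforward //.
- apply/measurable_realfun.measurable_EFinP.
  exact: continuous_Borel_measurable.
- rewrite preimage_setT; apply: (@continuous_integrable (h \o phi)) => t.
  by apply: continuous_comp; [exact: cphi | exact: ch].
Qed.

Definition ccontinuous (h : T -> R[i]) :=
  continuous (fun t => complex.Re (h t)) /\
  continuous (fun t => complex.Im (h t)).

Lemma ccontinuous_cst c : ccontinuous (fun _ => c).
Proof. by split=> t; exact: cvg_cst. Qed.

Lemma ccontinuousD f h :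
  ccontinuous f -> ccontinuous h -> ccontinuous (fun t => f t + h t).
Proof.
move=> [fRe fIm] [hRe hIm]; split.
  under eq_fun do rewrite complex_ReD.
  by move=> t; apply: cvgD; [exact: fRe | exact: hRe].
under eq_fun do rewrite complex_ImD.
by move=> t; apply: cvgD; [exact: fIm | exact: hIm].
Qed.

Lemma ccontinuousM f h :
  ccontinuous f -> ccontinuous h -> ccontinuous (fun t => f t * h t).
Proof.
move=> [fRe fIm] [hRe hIm]; split.
  under eq_fun do rewrite complex_ReM.
  by move=> t; apply: cvgB; apply: cvgM;
    [exact: fRe | exact: hRe | exact: fIm | exact: hIm].
under eq_fun do rewrite complex_ImM.
by move=> t; apply: cvgD; apply: cvgM;
  [exact: fRe | exact: hIm | exact: fIm | exact: hRe].
Qed.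

Lemma ccontinuous_conj f : ccontinuous f -> ccontinuous (fun t => conjc (f t)).
Proof.
move=> [fRe fIm]; split; first by under eq_fun do rewrite complex_Re_conj.
by under eq_fun do rewrite complex_Im_conj; move=> t; apply: cvgN; exact: fIm.
Qed.

Lemma ccontinuous_sum (I : Type) (r : seq I) (P : pred I) (F : I -> T -> R[i]) :
  (forall i, ccontinuous (F i)) ->
  ccontinuous (fun t => \sum_(i <- r | P i) F i t).
Proof.
move=> cF; rewrite -fct_sumE; apply: (big_ind ccontinuous) => //.
- exact: ccontinuous_cst.
- by move=> f h; exact: ccontinuousD.
Qed.

Lemma cintegral_cst c : cintegral mu (fun _ => c) = c.
Proof.
rewrite /cintegral !Rintegral_cst //.
by have /= -> := probability_setT mu; rewrite !mulr1; case: c.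
Qed.

Lemma cintegralD f h : ccontinuous f -> ccontinuous h ->
  cintegral mu (fun t => f t + h t) = cintegral mu f + cintegral mu h.
Proof.
move=> [fRe fIm] [hRe hIm]; rewrite /cintegral.
under eq_fun do rewrite complex_ReD.
under [X in Complex _ (Rintegral _ _ X)]eq_fun do rewrite complex_ImD.
by rewrite !RintegralD //; exact: continuous_integrable.
Qed.

Lemma cintegralZl c f : ccontinuous f ->
  cintegral mu (fun t => c * f t) = c * cintegral mu f.
Proof.
move=> [fRe fIm].
have iZ (k : R) g :
    continuous g -> mu.-integrable setT (EFin \o (fun t => k * g t)).
  move=> cg; apply: continuous_integrable => t.
  by apply: cvgM; [exact: cvg_cst | exact: cg].
rewrite /cintegral; case: c => a b.
under eq_fun do rewrite complex_ReM.
under [X in Complex _ (Rintegral _ _ X)]eq_fun do rewrite complex_ImM.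
rewrite /= RintegralB ?RintegralD //; try exact: iZ.
by rewrite !RintegralZl //; exact: continuous_integrable.
Qed.

Lemma cintegral_sum (I : Type) (r : seq I) (P : pred I) (F : I -> T -> R[i]) :
  (forall i, ccontinuous (F i)) ->
  cintegral mu (fun t => \sum_(i <- r | P i) F i t) =
  \sum_(i <- r | P i) cintegral mu (F i).
Proof.
move=> cF; elim: r => [|j r IHr].
  by under eq_fun do rewrite big_nil; rewrite cintegral_cst big_nil.
under eq_fun do rewrite big_cons; rewrite big_cons -IHr.
by case: (P j) => //; rewrite cintegralD //; exact: ccontinuous_sum.
Qed.

Lemma cintegral_sesquilinear (I J : finType) (a : I -> R[i]) (b : J -> R[i])
    (u : I -> T -> R[i]) (v : J -> T -> R[i]) :
  (forall i, ccontinuous (u i)) -> (forall j, ccontinuous (v j)) ->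
  cintegral mu (fun t => (\sum_i a i * u i t) * conjc (\sum_j b j * v j t)) =
  \sum_i \sum_j
    a i * conjc (b j) * cintegral mu (fun t => u i t * conjc (v j t)).
Proof.
move=> cu cv; have cuv i j : ccontinuous (fun t => u i t * conjc (v j t)).
  by apply: ccontinuousM; [exact: cu | exact/ccontinuous_conj/cv].
have cuv' i j :
    ccontinuous (fun t => a i * conjc (b j) * (u i t * conjc (v j t))).
  by apply: ccontinuousM; [exact: ccontinuous_cst | exact: cuv].
transitivity (cintegral mu (fun t =>
    \sum_i \sum_j a i * conjc (b j) * (u i t * conjc (v j t)))).
  congr cintegral; apply/funext => t; rewrite rmorph_sum mulr_suml.
  apply: eq_bigr => i _; rewrite mulr_sumr; apply: eq_bigr => j _.
  by rewrite rmorphM mulrACA.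
rewrite cintegral_sum => [|i]; last exact: ccontinuous_sum.
apply: eq_bigr => i _; rewrite cintegral_sum //.
by apply: eq_bigr => j _; rewrite cintegralZl.
Qed.

Lemma cintegral_comp_preserving (phi : T -> T) (h : T -> R[i]) :
  continuous phi ->
  (forall A : set (Borel T), measurable A -> mu (phi @^-1` A) = mu A) ->
  ccontinuous h -> cintegral mu (fun t => h (phi t)) = cintegral mu h.
Proof.
move=> cphi phi_mu [hRe hIm]; rewrite /cintegral.
by rewrite -(Rintegral_comp_preserving cphi phi_mu hRe)
  -(Rintegral_comp_preserving cphi phi_mu hIm).
Qed.

End CompactIntegral.

Section SchurOrthogonality.
Variables (R : realType) (G : ptopologicalType).
Variables (mul : G -> G -> G) (inv : G -> G) (one : G).
Hypothesis HG : is_compact_group mul inv one.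
Variable mu : probability (Borel G) R.
Hypothesis Hmu : is_normalized_haar mul mu.

Let compactG : compact [set: G].
Proof. by have [_ [_ [_ [_ [_ [_ ?]]]]]] := HG. Qed.

Lemma continuous_mull a : continuous (mul a).
Proof.
have [_ [_ [_ [cmul _]]]] := HG; move=> g.
apply: (@continuous_comp _ _ _ (fun h => (a, h)) (fun p => mul p.1 p.2)).
  by apply: cvg_pair => //=; exact: cvg_cst.
exact: cmul.
Qed.

Lemma haar_preimage_mull a (A : set (Borel G)) :
  measurable A -> mu (mul a @^-1` A) = mu A.
Proof.
have [mulA [mul1 [mulV _]]] := HG; move=> mA; rewrite -(proj1 Hmu (inv a) A mA).
congr (mu _); apply/seteqP; split => [g /= Aag | g Ag /=].
  by exists (mul a g) => //; rewrite mulA (proj1 (mulV a)) (proj1 (mul1 g)).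
by case: Ag => h Ah <-; rewrite mulA (proj2 (mulV a)) (proj1 (mul1 h)).
Qed.

Lemma cintegral_mull a h : ccontinuous h ->
  cintegral mu (fun g => h (mul a g)) = cintegral mu h.
Proof.
apply: cintegral_comp_preserving => //.
  exact: continuous_mull.
exact: haar_preimage_mull.
Qed.

Lemma unitary_rep_ccontinuous n (s : G -> 'M[R[i]]_n) :
  is_unitary_rep mul one s -> forall i j, ccontinuous (fun g => s g i j).
Proof. by case=> _ _ _ cs i j; split; case: (cs i j). Qed.

Lemma unitary_rep_adjK n (s : G -> 'M[R[i]]_n) g :
  is_unitary_rep mul one s -> adjmx (s g) *m s g = 1%:M.
Proof. by case=> _ _ us _; apply: mulmx1C; exact: us. Qed.

Section Average.
Variables (n1 n2 : nat) (s1 : G -> 'M[R[i]]_n1) (s2 : G -> 'M[R[i]]_n2).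
Hypothesis s1_rep : is_unitary_rep mul one s1.
Hypothesis s2_rep : is_unitary_rep mul one s2.
Variables (k1 : 'I_n1) (k2 : 'I_n2).

(* The matrix \int_G s1(g) E_(k1,k2) s2(g)^* dg, which intertwines s1 and s2
   by left invariance of mu. *)
Definition schur_average : 'M[R[i]]_(n1, n2) :=
  \matrix_(j1, j2) cintegral mu (fun g => s1 g j1 k1 * conjc (s2 g j2 k2)).

Lemma schur_average_intertwines h :
  s1 h *m schur_average = schur_average *m s2 h.
Proof.
have cs1 := unitary_rep_ccontinuous s1_rep.
have cs2 := unitary_rep_ccontinuous s2_rep.
suff avgK : s1 h *m schur_average *m adjmx (s2 h) = schur_average.
  by rewrite -[in RHS]avgK -mulmxA unitary_rep_adjK // mulmx1.
apply/matrixP => j1 j2; rewrite mxE [RHS]mxE -(cintegral_mull h); last first.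
  by apply: ccontinuousM; [exact: cs1 | exact/ccontinuous_conj/cs2].
have [s1M _ _ _] := s1_rep; have [s2M _ _ _] := s2_rep.
under [X in _ = cintegral _ X]eq_fun do rewrite s1M s2M !mxE.
rewrite cintegral_sesquilinear // exchange_big; apply: eq_bigr => b _.
rewrite !mxE mulr_suml; apply: eq_bigr => a _.
by rewrite !mxE mulrAC.
Qed.

End Average.

Lemma schur_average_trace n (s : G -> 'M[R[i]]_n) (k k' : 'I_n) :
  is_unitary_rep mul one s -> \tr (schur_average s s k k') = (k' == k)%:R.
Proof.
move=> s_rep; have cs := unitary_rep_ccontinuous s_rep.
rewrite /mxtrace; under eq_bigr do rewrite mxE.
rewrite -cintegral_sum // => [|j]; last first.
  by apply: ccontinuousM; [exact: cs | exact/ccontinuous_conj/cs].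
rewrite -[RHS](cintegral_cst mu); congr cintegral; apply/funext => g.
have /matrixP/(_ k' k) := unitary_rep_adjK g s_rep; rewrite !mxE => <-.
by apply: eq_bigr => j _; rewrite !mxE mulrC.
Qed.

Lemma schur_orthogonality n (s : G -> 'M[R[i]]_n) j j' k k' :
  is_unitary_rep mul one s -> is_irreducible s ->
  cintegral mu (fun g => s g j k * conjc (s g j' k')) =
  (j == j')%:R * (k == k')%:R / n%:R.
Proof.
move=> s_rep s_irr; have n_neq0 : n%:R != 0 :> R[i].
  by rewrite pnatr_eq0 -lt0n; case: s_irr.
have [c avg_c] := irreducible_commutant_scalar s_irr
  (schur_average_intertwines s_rep s_rep k k').
have cE : c = (k == k')%:R / n%:R.
  have := schur_average_trace k k' s_rep.
  rewrite avg_c mxtrace_scalar -[c *+ n]mulr_natr eq_sym => <-.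
  by rewrite mulfK.
have /matrixP/(_ j j') := avg_c; rewrite !mxE => ->; rewrite cE.
by case: (j == j'); rewrite ?mulr1n ?mul1r ?mulr0n ?mul0r.
Qed.

Lemma schur_orthogonality_noniso n1 n2 (s1 : G -> 'M[R[i]]_n1)
    (s2 : G -> 'M[R[i]]_n2) j j' k k' :
  is_unitary_rep mul one s1 -> is_unitary_rep mul one s2 ->
  is_irreducible s1 -> is_irreducible s2 -> ~ rep_iso s1 s2 ->
  cintegral mu (fun g => s1 g j k * conjc (s2 g j' k')) = 0.
Proof.
move=> s1_rep s2_rep s1_irr s2_irr noniso.
have := intertwiner_noniso_eq0 s1_irr s2_irr noniso
  (schur_average_intertwines s1_rep s2_rep k k').
by move=> /matrixP/(_ j j'); rewrite !mxE.
Qed.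

End SchurOrthogonality.

Section Coordinates.
Variables (R : realType) (G : ptopologicalType).
Variables (mul : G -> G -> G) (inv : G -> G) (one : G).
Hypothesis HG : is_compact_group mul inv one.
Variable mu : probability (Borel G) R.
Hypothesis Hmu : is_normalized_haar mul mu.
Variables (n : nat) (rho : G -> 'M[R[i]]_n).
Hypothesis Hrho : is_unitary_rep mul one rho.
Variables (L : nat) (N Rm : 'I_L -> nat).
Variable sigma : forall l : 'I_L, G -> 'M[R[i]]_(N l).
Hypothesis Hsigma :
  forall l, is_unitary_rep mul one (sigma l) /\ is_irreducible (sigma l).
Hypothesis Hnoniso :
  forall l l' : 'I_L, l != l' -> ~ rep_iso (sigma l) (sigma l').
Variable Phi : cidx N Rm -> 'I_n -> R[i].
Hypothesis HPhi : unitary_coords Phi.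
Hypothesis HPhieq : equivariant_coords rho sigma Phi.

Let compactG : compact [set: G].
Proof. by have [_ [_ [_ [_ [_ [_ ?]]]]]] := HG. Qed.

Definition coord_mx (m : 'M[R[i]]_n) x y :=
  \sum_a \sum_b Phi x a * m a b * conjc (Phi y b).

Lemma coords_isometry (c : 'I_n -> R[i]) a :
  \sum_x conjc (Phi x a) * (\sum_k Phi x k * c k) = c a.
Proof.
have [PhiPhi _] := HPhi.
transitivity (\sum_k (a == k)%:R * c k).
  under eq_bigr do rewrite mulr_sumr; rewrite exchange_big.
  apply: eq_bigr => k _; rewrite -PhiPhi mulr_suml.
  by apply: eq_bigr => x _; rewrite mulrA.
rewrite (bigD1 a) //= eqxx mul1r big1 ?addr0 // => k.
by rewrite eq_sym => /negPf ->; rewrite mul0r.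
Qed.

Lemma coords_isometry_conj (c : 'I_n -> R[i]) b :
  \sum_y (\sum_k c k * conjc (Phi y k)) * Phi y b = c b.
Proof.
have [PhiPhi _] := HPhi.
transitivity (\sum_k c k * (k == b)%:R).
  under eq_bigr do rewrite mulr_suml; rewrite exchange_big.
  apply: eq_bigr => k _; rewrite -PhiPhi mulr_sumr.
  by apply: eq_bigr => y _; rewrite mulrA.
rewrite (bigD1 b) //= eqxx mulr1 big1 ?addr0 // => k /negPf ->.
by rewrite mulr0.
Qed.

Lemma coord_mxK m a b :
  \sum_x \sum_y conjc (Phi x a) * coord_mx m x y * Phi y b = m a b.
Proof.
rewrite -(coords_isometry (m^~ b) a); apply: eq_bigr => x _.
rewrite -(coords_isometry_conj (fun b' => \sum_k Phi x k * m k b') b) mulr_sumr.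
apply: eq_bigr => y _; rewrite -mulrA; congr (_ * (_ * _)).
rewrite /coord_mx exchange_big; apply: eq_bigr => b' _.
by rewrite mulr_suml.
Qed.

Lemma coord_moment2 f l l' (j : 'I_(N l)) (i : 'I_(Rm l))
    (j' : 'I_(N l')) (i' : 'I_(Rm l')) :
  coord_mx (moment2 mu rho f) (mkidx j i) (mkidx j' i') =
  \sum_k \sum_k' coords Phi f (mkidx k i) * conjc (coords Phi f (mkidx k' i')) *
    cintegral mu (fun g => sigma l g j k * conjc (sigma l' g j' k')).
Proof.
have crho := unitary_rep_ccontinuous Hrho.
have csigma l0 := unitary_rep_ccontinuous (proj1 (Hsigma l0)).
have crhof a : ccontinuous (fun g => (rho g *m f) a 0).
  under eq_fun do rewrite mxE.
  apply: ccontinuous_sum => k.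
  by apply: ccontinuousM; [exact: crho | exact: ccontinuous_cst].
transitivity (cintegral mu (fun g => coords Phi (rho g *m f) (mkidx j i) *
    conjc (coords Phi (rho g *m f) (mkidx j' i')))).
  rewrite cintegral_sesquilinear //.
  apply: eq_bigr => a _; apply: eq_bigr => b _.
  by rewrite mxE mulrAC.
under eq_fun do rewrite !HPhieq.
under eq_fun do under eq_bigr do rewrite mulrC.
under eq_fun do under [X in conjc X]eq_bigr do rewrite mulrC.
exact: cintegral_sesquilinear.
Qed.

(* The transpose of the paper's A_l: row i holds the coordinates of the
   component of f in the i-th copy of V_l. *)
Definition coord_block f l : 'M[R[i]]_(Rm l, N l) :=
  \matrix_(i, k) coords Phi f (mkidx k i).

Lemma coord_moment2_diag f l (j : 'I_(N l)) (i : 'I_(Rm l)) j' i' :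
  coord_mx (moment2 mu rho f) (mkidx j i) (mkidx j' i') =
  (j == j')%:R / (N l)%:R * (coord_block f l *m (coord_block f l)^t*) i i'.
Proof.
have [sigma_rep sigma_irr] := Hsigma l.
rewrite coord_moment2 mxE mulr_sumr; apply: eq_bigr => k _.
rewrite (bigD1 k) //= big1 => [|k' k'k]; last first.
  rewrite (schur_orthogonality HG Hmu) // [k == _]eq_sym (negPf k'k).
  by rewrite mulr0 mul0r mulr0.
by rewrite (schur_orthogonality HG Hmu) // eqxx mulr1 addr0 !mxE mulrC.
Qed.

Lemma coord_moment2_offdiag f l l' (j : 'I_(N l)) (i : 'I_(Rm l))
    (j' : 'I_(N l')) (i' : 'I_(Rm l')) :
  l != l' -> coord_mx (moment2 mu rho f) (mkidx j i) (mkidx j' i') = 0.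
Proof.
move=> ll'; rewrite coord_moment2 big1 // => k _; rewrite big1 // => k' _.
have [[rep irr] [rep' irr']] := (Hsigma l, Hsigma l').
by rewrite (schur_orthogonality_noniso HG Hmu _ _ _ _ rep rep' irr irr'
  (Hnoniso ll')) mulr0.
Qed.

Lemma moment2_eq_gram f f' :
  moment2 mu rho f = moment2 mu rho f' <->
  forall l, coord_block f l *m (coord_block f l)^t* =
            coord_block f' l *m (coord_block f' l)^t*.
Proof.
split=> [mff' l | gram_ff'].
  have N_gt0 : (0 < N l)%N by case: (proj2 (Hsigma l)).
  have Ninv_neq0 : (N l)%:R^-1 != 0 :> R[i] by rewrite invr_eq0 pnatr_eq0 -lt0n.
  apply/matrixP => i i'; apply: (mulfI Ninv_neq0).
  have := coord_moment2_diag f (Ordinal N_gt0) i (Ordinal N_gt0) i'.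
  by rewrite mff' coord_moment2_diag eqxx !mul1r => <-.
apply/matrixP => a b; rewrite -coord_mxK -[RHS]coord_mxK.
apply: eq_bigr => [[l [j i]]] _; apply: eq_bigr => [[l' [j' i']]] _.
congr (_ * _ * _); have [ll'|ll'] := eqVneq l l'.
  by subst l'; rewrite !coord_moment2_diag gram_ff'.
by rewrite !coord_moment2_offdiag.
Qed.

Lemma H_related_gram f f' :
  H_related Phi f f' <->
  forall l, coord_block f l *m (coord_block f l)^t* =
            coord_block f' l *m (coord_block f' l)^t*.
Proof.
split=> [[U [U_unitary fU]] l | gram_ff'].
  have -> : coord_block f l = coord_block f' l *m (U l)^T.
    apply/matrixP => i j; rewrite !mxE fU.
    by apply: eq_bigr => k _; rewrite !mxE mulrC.
  have UTu : (U l)^T \is unitarymx.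
    by rewrite trmx_unitary; apply/unitarymxP/U_unitary.
  by rewrite trmxC_mul mulmxA mulmxtVK.
have V_ex l : exists2 V : 'M[R[i]]_(N l),
    V \is unitarymx & coord_block f' l *m V = coord_block f l.
  exact/eq_gram_unitary/esym/gram_ff'.
exists (fun l => (s2val (cid2 (V_ex l)))^T); split=> [l | l j i].
  by case: cid2 => V uV _ /=; apply/unitarymxP; rewrite trmx_unitary.
case: cid2 => V _ /= /matrixP/(_ i j); rewrite !mxE => <-.
by apply: eq_bigr => k _; rewrite !mxE mulrC.
Qed.

End Coordinates.

Theorem theorem2p3
  (R : realType) (G : ptopologicalType)
  (mul : G -> G -> G) (inv : G -> G) (one : G)
  (HG : is_compact_group mul inv one)
  (mu : probability (Borel G) R) (Hmu : is_normalized_haar mul mu)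
  (n : nat) (rho : G -> 'M[R[i]]_n) (Hrho : is_unitary_rep mul one rho)
  (L : nat) (N Rm : 'I_L -> nat)
  (sigma : forall l : 'I_L, G -> 'M[R[i]]_(N l))
  (Hsigma : forall l, is_unitary_rep mul one (sigma l) /\ is_irreducible (sigma l))
  (Hnoniso : forall l l' : 'I_L, l != l' -> ~ rep_iso (sigma l) (sigma l'))
  (Phi : cidx N Rm -> 'I_n -> R[i])
  (HPhi : unitary_coords Phi)
  (HPhieq : equivariant_coords rho sigma Phi)
  (f f' : 'cV[R[i]]_n) :
  moment2 mu rho f = moment2 mu rho f' <-> H_related Phi f f'.
Proof.
apply: iff_trans
  (moment2_eq_gram HG Hmu Hrho Hsigma Hnoniso HPhi HPhieq f f') _.
exact: iff_sym (H_related_gram Phi f f').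
Qed.
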